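(* Let $d\ge 2$ and $n\ge 2$ be integers. Let $R=\mathbb{Q}[a_{i,j}:1\le i,j\le n]$ be the polynomial ring in $n^2$ indeterminates, let $A$ be the $n\times n$ matrix with $A_{i,j}=a_{i,j}$, and let $f=(f_1,\dots,f_n)$ with $f_i=x_i-\big(\sum_{j=1}^n a_{i,j}x_j\big)^d\in R[x_1,\dots,x_n]$. Write \[ \mathrm{Jac}(f)=\det\Big(\frac{\partial f_i}{\partial x_j}\Big)_{1\le i,j\le n}=\sum_{\alpha} J_\alpha x^\alpha,\qquad J_\alpha\in R, \] over multi-degrees $\alpha\in\mathbb{Z}_{\ge0}^n$. For integers $1\le k\le n-1$ and $1\le l\le n$, let $\alpha(k,l)$ be the multi-degree with $\alpha_l=k(d-1)$ and $\alpha_i=0$ for $i\ne l$. Then \[ J_{\alpha(k,l)}=(-d)^k\sum_{1\le i_1<i_2<\cdots<i_k\le n}|A|_{(i_1,\ldots,i_k)}\prod_{r=1}^k a_{i_r,l}^{\,d-1}, \] where $|A|_{(i_1,\ldots,i_k)}$ denotes the principal minor of $A$ on rows and columns $i_1,\ldots,i_k$. *)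

From HB Require Import structures.
From mathcomp Require Import all_boot all_order all_algebra.
From mathcomp.multinomials Require Import mpoly.
Set Implicit Arguments. Unset Strict Implicit. Unset Printing Implicit Defensive.
Import GRing.Theory.
Local Open Scope ring_scope.

Definition Ra (n : nat) := {mpoly rat[n * n]}.

Definition avar (n : nat) (i j : 'I_n) : Ra n := 'X_(mxvec_index i j).

Definition Amx (n : nat) : 'M[Ra n]_n := \matrix_(i, j) avar i j.

Definition Rx (n : nat) := {mpoly (Ra n)[n]}.

Definition fpoly (n d : nat) (i : 'I_n) : Rx n :=
  'X_i - (\sum_(j < n) (avar i j)%:MP * 'X_j) ^+ d.

Definition jac (n d : nat) : Rx n :=
  \det (\matrix_(i, j) mderiv j (fpoly d i)).

Definition alpha (n d k : nat) (l : 'I_n) : 'X_{1..n} :=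
  [multinom (if i == l then (k * (d - 1))%N else 0%N) | i < n].

Definition incr (n k : nat) (s : {ffun 'I_k -> 'I_n}) : bool :=
  [forall i : 'I_k, forall j : 'I_k, (i < j)%N ==> (s i < s j)%N].

Definition pminor (n k : nat) (s : {ffun 'I_k -> 'I_n}) : Ra n :=
  \det (\matrix_(p, q) Amx n (s p) (s q)).

(* Restrict Jac(f) to the x_l-axis (x_l = t, x_j = 0 for j <> l): this keeps exactly
   the coefficients J_alpha with alpha supported on l, so J_alpha(k,l) becomes the
   coefficient of t^(k(d-1)) in the restricted determinant.  On the axis the linear
   form sum_j a_ij x_j becomes a_il t, so the Jacobian matrix becomes 1 - t^(d-1) B
   with B_ij = d a_il^(d-1) a_ij.  Expanding det (1 - u B) = sum_S (-u)^|S| det B_S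
   over principal minors, that coefficient collects the minors of size k, and
   factoring d a_il^(d-1) out of row i of B_S leaves the minor |A|_S. *)

From HB Require Import structures.
From mathcomp Require Import all_boot all_order all_algebra.
From mathcomp.multinomials Require Import mpoly.
From mathcomp Require Import perm ring.
Set Implicit Arguments. Unset Strict Implicit. Unset Printing Implicit Defensive.
Import GRing.Theory.
Local Open Scope ring_scope.

Section PrincipalMinors.
Variable R : comPzRingType.

(* Encodes the principal submatrix of [B] on [S] without reindexing: its
   determinant is that principal minor. *)
Definition principal_mx n (S : {set 'I_n}) (B : 'M[R]_n) : 'M[R]_n :=
  \matrix_(i, j) if i \in S then B i j else (i == j)%:R.

Lemma principal_mx0 n (B : 'M[R]_n) : principal_mx set0 B = 1%:M.
Proof. by apply/matrixP => i j; rewrite !mxE inE. Qed.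

Lemma principal_mxT n (B : 'M[R]_n) : principal_mx setT B = B.
Proof. by apply/matrixP => i j; rewrite mxE inE. Qed.

Lemma det_mxsub_perm n (s : 'S_n) (B : 'M[R]_n) : \det (mxsub s s B) = \det B.
Proof.
have -> : mxsub s s B = row_perm s (col_perm s B) by apply/matrixP => i j; rewrite !mxE.
rewrite row_permE col_permE !det_mulmx !det_perm odd_permV mulrCA mulrA.
by rewrite -mulrA -expr2 sqrr_sign mulr1.
Qed.

Lemma det_scale_rows n (c : 'I_n -> R) (A : 'M[R]_n) :
  \det (\matrix_(i, j) (c i * A i j)) = (\prod_i c i) * \det A.
Proof.
have -> : \matrix_(i, j) (c i * A i j) = diag_mx (\row_i c i) *m A.
  by apply/matrixP => i j; rewrite mul_diag_mx !mxE.
by rewrite det_mulmx det_diag; under eq_bigr do rewrite mxE.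
Qed.

Lemma det_principal_mx_lift n (S : {set 'I_n.+1}) (B : 'M[R]_n.+1) i :
  i \notin S ->
  \det (principal_mx S B) =
  \det (principal_mx [set q | lift i q \in S] (mxsub (lift i) (lift i) B)).
Proof.
move=> iS; rewrite (expand_det_row _ i) (bigD1 i) //= big1 ?addr0; last first.
  by move=> j /negPf ji; rewrite mxE (negPf iS) eq_sym ji mul0r.
rewrite mxE (negPf iS) eqxx mul1r /cofactor addnn -signr_odd odd_double mul1r.
congr (\det _); apply/matrixP => p q; rewrite !mxE inE (inj_eq (@lift_inj _ i)).
by case: ifP => //; rewrite mxE.
Qed.

Lemma det_principal_mx n k (S : {set 'I_n}) (s : 'I_k -> 'I_n) (B : 'M[R]_n) :
  injective s -> S =i codom s -> \det (principal_mx S B) = \det (mxsub s s B).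
Proof.
case: k s => [|k] s s_inj S_s.
  have -> : S = set0 by apply/setP => x; rewrite S_s inE; apply/codomP => -[[]].
  by rewrite principal_mx0 det1 det_mx00.
elim: n S s B s_inj S_s => [|n IHn] S s B s_inj S_s; first by case: (s ord0).
have [i /= iS | S_full] := pickP [pred i | i \notin S]; last first.
  have {}S_full : S = setT by apply/setP => x; rewrite inE; apply/negbFE/S_full.
  have ek : k.+1 = n.+1.
    rewrite -[LHS](card_ord k.+1) -(card_codom s_inj) -[RHS](card_ord n.+1).
    by apply: eq_card => x; rewrite -S_s S_full !inE.
  move: s s_inj S_s; rewrite ek => s s_inj _.
  by rewrite S_full principal_mxT -(det_mxsub_perm (perm s_inj)); congr (\det _);
    apply/matrixP => p q; rewrite !mxE !permE.
rewrite (det_principal_mx_lift _ iS).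
have s_lift p : {j | s p = lift i j}.
  by case: (unliftP i (s p)) => [j ->| e]; [exists j | move: iS; rewrite S_s -e codom_f].
pose s' p := sval (s_lift p).
have ls' p : lift i (s' p) = s p by rewrite /s'; case: (s_lift p).
rewrite (IHn _ s').
- by congr (\det _); apply/matrixP => p q; rewrite !mxE !ls'.
- by move=> p q e; apply: s_inj; rewrite -!ls' e.
move=> q; rewrite inE S_s; apply/codomP/codomP => -[p e]; exists p.
  by apply: (@lift_inj _ i); rewrite ls'.
by rewrite e ls'.
Qed.

Lemma det_1_sub_scale n (t : R) (B : 'M[R]_n) :
  \det (1%:M - t *: B) = \sum_(S : {set 'I_n}) (- t) ^+ #|S| * \det (principal_mx S B).
Proof.
rewrite /determinant.
under [RHS]eq_bigr do rewrite mulr_sumr.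
rewrite exchange_big /=; apply: eq_bigr => s _.
under eq_bigr do rewrite !mxE addrC.
rewrite bigA_distr mulr_sumr; apply: eq_bigr => J _.
rewrite mulrCA; congr (_ * _).
rewrite (eq_bigr (fun i => (if i \in J then - t else 1) * principal_mx J B i (s i)));
  last by move=> i _; rewrite mxE; case: (i \in J); rewrite ?mulNr ?mul1r.
by rewrite big_split /= -big_mkcond /= prodr_const.
Qed.

End PrincipalMinors.

Lemma map_principal_mx (R S' : comPzRingType) (f : {rmorphism R -> S'}) n
    (S : {set 'I_n}) (B : 'M[R]_n) :
  map_mx f (principal_mx S B) = principal_mx S (map_mx f B).
Proof. by apply/matrixP => i j; rewrite !mxE; case: (i \in S); rewrite ?rmorph_nat. Qed.

Lemma coef_det_1_sub_Xn_scale (R : comNzRingType) (n e k : nat) (B : 'M[R]_n) :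
  (0 < e)%N ->
  (\det (1%:M - 'X^e *: map_mx polyC B))`_(k * e) =
  (-1) ^+ k * \sum_(S : {set 'I_n} | #|S| == k) \det (principal_mx S B).
Proof.
move=> e_gt0; rewrite det_1_sub_scale coef_sum mulr_sumr [RHS]big_mkcond /=.
apply: eq_bigr => S _; rewrite -map_principal_mx det_map_mx /=.
set c := \det _; set m := #|S|.
have -> : (- 'X^e) ^+ m * c%:P = ((-1) ^+ m * c)%:P * 'X^(e * m).
  by rewrite -[- 'X^e]mulN1r exprMn -exprM mulrAC rmorphM rmorphXn rmorphN1.
rewrite coefCM coefXn mulnC eqn_pmul2l //.
by rewrite eq_sym; case: eqP => [->|]; rewrite ?mulr1 ?mulr0.
Qed.

Section IncreasingMaps.
Variable n : nat.
Implicit Type A : {set 'I_n}.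

Local Notation ord_lt := (relpre (@nat_of_ord n) ltn).

Lemma ord_lt_trans : transitive ord_lt.
Proof. by move=> y x z; apply: ltn_trans. Qed.

Lemma sorted_enum_ord m : sorted (relpre (@nat_of_ord m) ltn) (enum 'I_m).
Proof. by rewrite -sorted_map val_enum_ord iota_ltn_sorted. Qed.

Lemma sorted_enum_set A : sorted ord_lt (enum A).
Proof.
have -> : enum A = filter (mem A) (enum 'I_n) by rewrite enumT /enum_mem.
exact: (sorted_filter ord_lt_trans _ (sorted_enum_ord n)).
Qed.

Lemma incr_inj k (s : {ffun 'I_k -> 'I_n}) : incr s -> injective s.
Proof.
move=> /forallP s_incr p q spq; apply/eqP; apply: contraT.
by rewrite neq_ltn => /orP[] lt; [move: (s_incr p) | move: (s_incr q)];
  move=> /forallP/(_ _)/implyP/(_ lt); rewrite spq ltnn.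
Qed.

Lemma enum_codom_incr k (s : {ffun 'I_k -> 'I_n}) : incr s ->
  enum [set x in codom s] = codom s.
Proof.
move=> s_incr; apply: (irr_sorted_eq ord_lt_trans) => [x|||x].
- exact: ltnn.
- exact: sorted_enum_set.
- rewrite codomE; apply: homo_sorted (sorted_enum_ord k).
  by move=> p q; apply: (implyP (forallP (forallP s_incr p) q)).
- by rewrite mem_enum inE.
Qed.

Lemma sum_card_set_incr (V : nmodType) (k : nat) (x0 : 'I_n) (G : {set 'I_n} -> V) :
  \sum_(S : {set 'I_n} | #|S| == k) G S =
  \sum_(s : {ffun 'I_k -> 'I_n} | incr s) G [set x in codom s].
Proof.
pose nth_enum A := [ffun p : 'I_k => nth x0 (enum A) p].
rewrite (reindex_onto (fun s : {ffun 'I_k -> 'I_n} => [set x in codom s]) nth_enum);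
  last first.
  move=> S /eqP cardS; apply/setP => x; rewrite inE.
  apply/codomP/idP => [[p ->]|xS].
    by rewrite ffunE -mem_enum mem_nth // -cardE cardS.
  have ltxk : (index x (enum S) < k)%N by rewrite -cardS cardE index_mem mem_enum.
  by exists (Ordinal ltxk); rewrite ffunE nth_index // mem_enum.
apply: eq_bigl => s; apply/andP/idP => [[/eqP cardS /eqP <-] | s_incr].
  apply/forallP => p; apply/forallP => q; apply/implyP => lt_pq; rewrite !ffunE.
  by apply: (sorted_ltn_nth ord_lt_trans) (sorted_enum_set _) _ _ _ _ lt_pq;
    rewrite inE -cardE cardS.
split; first by rewrite cardsE card_codom ?card_ord //; apply: incr_inj.
apply/eqP/ffunP => p; rewrite ffunE enum_codom_incr // codomE.
by rewrite (nth_map p) ?size_enum_ord // nth_ord_enum.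
Qed.

End IncreasingMaps.

Section OnAxis.
Variables (R : comNzRingType) (n : nat) (l : 'I_n).

Definition axis_pt (j : 'I_n) : {poly R} := if j == l then 'X else 0.

Definition on_axis : {mpoly R[n]} -> {poly R} := mmap (@polyC R) axis_pt.

HB.instance Definition _ := GRing.RMorphism.on on_axis.

Definition axis_mnm (N : nat) : 'X_{1..n} :=
  [multinom (if i == l then N else 0%N) | i < n].

Lemma coef_mmap1_axis (m : 'X_{1..n}) N :
  (mmap1 axis_pt m)`_N = (m == axis_mnm N)%:R.
Proof.
rewrite /mmap1 (bigD1 l) //= {1}/axis_pt eqxx.
have [off_l|] := boolP [forall i, (i != l) ==> (m i == 0%N)]; last first.
  move=> /forallPn[i]; rewrite negb_imply => /andP[il mi].
  rewrite (bigD1 i) //= {1}/axis_pt (negPf il) expr0n (negPf mi) mul0r mulr0 coef0.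
  by case: eqP => // m_axis; move: mi; rewrite m_axis mnmE (negPf il).
have m_off_l i : i != l -> m i = 0%N by move=> il; apply/eqP/(implyP (forallP off_l i)).
rewrite big1 ?mulr1 => [|i /m_off_l ->]; last exact: expr0.
rewrite coefXn; suff -> : (N == m l) = (m == axis_mnm N) by [].
apply/idP/idP => [/eqP->|/eqP->]; last by rewrite mnmE eqxx.
by apply/eqP/mnmP => i; rewrite mnmE; case: eqVneq => [->|/m_off_l].
Qed.

Lemma coef_on_axis (p : {mpoly R[n]}) N : (on_axis p)`_N = p@_(axis_mnm N).
Proof.
rewrite [in RHS](mpolyE p) [in LHS](mpolyE p) !raddf_sum coef_sum /=.
apply: eq_bigr => m _.
by rewrite /on_axis mmapZ mmapX coefCM coef_mmap1_axis mcoeffZ mcoeffX.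
Qed.

Lemma on_axisX (j : 'I_n) : on_axis 'X_j = axis_pt j.
Proof. by rewrite /on_axis mmapX mmap1U. Qed.

Lemma on_axisC c : on_axis c%:MP = c%:P.
Proof. exact: mmapC. Qed.

End OnAxis.

Section MonomialDerivatives.
Variables (R : comNzRingType) (n : nat).

Lemma mderivXU (i j : 'I_n) : mderiv j ('X_i : {mpoly R[n]}) = (i == j)%:R.
Proof.
rewrite mderivX mnm1E; case: eqP => [->|_]; last by rewrite scale0r.
have -> : (U_(j) - U_(j))%MM = 0%MM by apply/mnmP => x; rewrite mnmBE subnn mnm0E.
by rewrite mpolyX0 scale1r.
Qed.

Lemma mderivXn (j : 'I_n) (p : {mpoly R[n]}) e :
  mderiv j (p ^+ e.+1) = e.+1%:R * p ^+ e * mderiv j p.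
Proof.
elim: e => [|e IHe]; first by rewrite expr1 expr0 mulr1 mul1r.
by rewrite exprS mderivM IHe -!natr1 !exprS; ring.
Qed.

End MonomialDerivatives.

Section Jacobian.
Variables (n d : nat).

Definition lin_form (i : 'I_n) : Rx n := \sum_(j < n) (avar i j)%:MP * 'X_j.

Definition jacobian_mx : 'M[Rx n]_n := \matrix_(i, j) mderiv j (fpoly d i).

Lemma mderiv_lin_form (i j : 'I_n) : mderiv j (lin_form i) = (avar i j)%:MP.
Proof.
rewrite raddf_sum (bigD1 j) //= big1 ?addr0 => [|k /negPf kj].
  by rewrite mderiv_mulC mderivXU eqxx mulr1.
by rewrite mderiv_mulC mderivXU kj mulr0.
Qed.

Lemma mderiv_fpoly (i j : 'I_n) : (0 < d)%N ->
  mderiv j (fpoly d i) = (i == j)%:R - d%:R * lin_form i ^+ (d - 1) * (avar i j)%:MP.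
Proof.
by case: d => // e _; rewrite mderivB mderivXU mderivXn mderiv_lin_form subn1.
Qed.

Lemma on_axis_lin_form (l i : 'I_n) : on_axis l (lin_form i) = (avar i l)%:P * 'X.
Proof.
rewrite raddf_sum (bigD1 l) //= big1 ?addr0 => [|j jl].
  by rewrite rmorphM /= on_axisC on_axisX /axis_pt eqxx.
by rewrite rmorphM /= on_axisX /axis_pt (negPf jl) mulr0.
Qed.

Lemma map_on_axis_jacobian_mx (l : 'I_n) : (0 < d)%N ->
  map_mx (on_axis l) jacobian_mx =
  1%:M - 'X^(d - 1) *:
    map_mx polyC (\matrix_(i, j) (d%:R * avar i l ^+ (d - 1) * avar i j)).
Proof.
move=> d_gt0; apply/matrixP => i j; rewrite !mxE mderiv_fpoly //.
rewrite rmorphB rmorph_nat !rmorphM rmorphXn rmorph_nat /= on_axisC on_axis_lin_form.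
by rewrite polyC_exp polyC_natr exprMn; ring.
Qed.

End Jacobian.

Theorem mainTheorem2 (d n : nat) (hd : (2 <= d)%N) (hn : (2 <= n)%N)
  (k : nat) (hk1 : (1 <= k)%N) (hk2 : (k <= n - 1)%N) (l : 'I_n) :
  (jac n d)@_(alpha d k l) =
  (- (d%:R : Ra n)) ^+ k *
    \sum_(s : {ffun 'I_k -> 'I_n} | incr s)
       pminor s * \prod_(r < k) (avar (s r) l) ^+ (d - 1).
Proof.
(* The identity holds for all n and k. *)
have d1_gt0 : (0 < d - 1)%N by rewrite subn_gt0.
have -> : jac n d = \det (jacobian_mx n d) by [].
rewrite -[alpha _ _ _]/(axis_mnm l (k * (d - 1))) -coef_on_axis -det_map_mx.
rewrite map_on_axis_jacobian_mx ?(ltnW hd) // coef_det_1_sub_Xn_scale //.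
rewrite (sum_card_set_incr _ l) [in RHS]exprNn -mulrA; congr (_ * _).
rewrite mulr_sumr; apply: eq_bigr => s s_incr.
rewrite (det_principal_mx _ (incr_inj s_incr)) => [|x]; last by rewrite inE.
rewrite (_ : mxsub s s _ = \matrix_(p, q)
    (d%:R * avar (s p) l ^+ (d - 1) * mxsub s s (Amx n) p q)); last first.
  by apply/matrixP => p q; rewrite !mxE.
by rewrite det_scale_rows big_split prodr_const card_ord /= -mulrA [pminor s * _]mulrC.
Qed.
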